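(* Let $p$ (true dynamics) and $\hat p$ (learned model) be dynamics kernels, $\pi_D$ and $\pi$ policies, and $k\ge0$ an integer. Suppose $\sup_{s\in\mathcal S} D_{TV}\big(\pi_D(\cdot\mid s),\pi(\cdot\mid s)\big)\le\epsilon_\pi$, and suppose that, for the branched construction with pre-branch pair $(\pi_D,p)$ and post-branch pair $(\pi,p)$ and branch length $k$, for every $t\ge0$ and every $i$ with $m_t\le i<t$, $$\mathbb E_{s\sim \nu_{t,i},\,a\sim\pi(\cdot\mid s)}\Big[D_{TV}\big(p(\cdot\mid s,a),\hat p(\cdot\mid s,a)\big)\Big]\le\epsilon_{m'},$$ where $\nu_{t,i}$ is the law of $s_i$ in that construction. Let $\eta[\pi]=\eta(\pi,p)$ and $\eta^{\mathrm{branch}}[\pi]=\eta_k(\pi_D,p;\pi,\hat p)$. Then $$\eta[\pi]\ \ge\ \eta^{\mathrm{branch}}[\pi]-2r_{\max}\left[\frac{\gamma^{k+1}\epsilon_\pi}{(1-\gamma)^2}+\frac{\gamma^{k}\epsilon_\pi}{1-\gamma}+\frac{k}{1-\gamma}\,\epsilon_{m'}\right].$$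
   Context: Let $\mathcal S$ and $\mathcal A$ be countable (e.g. finite) state and action spaces, $\rho_0$ a probability distribution on $\mathcal S$ (initial state distribution), $\gamma\in(0,1)$ a discount factor, and $r:\mathcal S\times\mathcal A\to\mathbb R$ a reward function with $|r(s,a)|\le r_{\max}$ for all $(s,a)$. A policy is a Markov kernel $\pi(a\mid s)$ from $\mathcal S$ to $\mathcal A$; a dynamics kernel is a Markov kernel $q(s'\mid s,a)$ from $\mathcal S\times\mathcal A$ to $\mathcal S$. For a policy $\pi$ and dynamics $q$, the return is $\eta(\pi,q)=\sum_{t\ge0}\gamma^t\,\mathbb E[r(s_t,a_t)]$, where $s_0\sim\rho_0$, $a_t\sim\pi(\cdot\mid s_t)$, $s_{t+1}\sim q(\cdot\mid s_t,a_t)$. For probability distributions $\mu,\nu$ on a countable set, $D_{TV}(\mu,\nu)=\frac12\sum_x|\mu(x)-\nu(x)|$. Branched return: given a ''pre-branch'' pair (policy $\pi^{\mathrm{pre}}$, dynamics $q^{\mathrm{pre}}$), a ''post-branch'' pair (policy $\pi^{\mathrm{post}}$, dynamics $q^{\mathrm{post}}$) and an integer $k\ge0$, for each $t\ge0$ let $m_t=\max(t-k,0)$ and generate $s_0\sim\rho_0$; for $0\le i<m_t$: $a_i\sim\pi^{\mathrm{pre}}(\cdot\mid s_i)$, $s_{i+1}\sim q^{\mathrm{pre}}(\cdot\mid s_i,a_i)$; for $m_t\le i<t$: $a_i\sim\pi^{\mathrm{post}}(\cdot\mid s_i)$, $s_{i+1}\sim q^{\mathrm{post}}(\cdot\mid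 s_i,a_i)$; finally $a_t\sim\pi^{\mathrm{post}}(\cdot\mid s_t)$. Let $d_t$ be the law of $(s_t,a_t)$ so produced. The $k$-branched return is $\eta_k(\pi^{\mathrm{pre}},q^{\mathrm{pre}};\pi^{\mathrm{post}},q^{\mathrm{post}})=\sum_{t\ge0}\gamma^t\,\mathbb E_{(s,a)\sim d_t}[r(s,a)]$. (Thus the state at time $t$ is obtained by following the pre-branch pair up to time $t-k$ and then the post-branch pair for the remaining at most $k$ steps; note $\eta_k(\pi,q;\pi,q)=\eta(\pi,q)$.) *)

From Stdlib Require Import Reals List ClassicalEpsilon.
Open Scope R_scope.

Definition fsum {T : Type} (f : T -> R) (l : list T) : R :=
  fold_right (fun x acc => f x + acc) 0 l.

Definition psums {T : Type} (f : T -> R) : R -> Prop :=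
  fun s => exists l : list T, NoDup l /\ s = fsum f l.

Lemma psums_0 {T : Type} (f : T -> R) : exists x, psums f x.
Proof. exists 0. exists nil. split; [constructor | reflexivity]. Qed.

(** Sum of a nonnegative function: supremum of its finite partial sums
    (convention: 0 if the partial sums are unbounded). *)
Definition psum {T : Type} (f : T -> R) : R :=
  match excluded_middle_informative (bound (psums f)) with
  | left hb => proj1_sig (completeness (psums f) hb (psums_0 f))
  | right _ => 0
  end.

Definition tsum {T : Type} (f : T -> R) : R :=
  psum (fun x => Rmax (f x) 0) - psum (fun x => Rmax (- f x) 0).

Definition countable (T : Type) : Prop :=
  exists enc : T -> nat, forall x y, enc x = enc y -> x = y.

Definition is_distr {T : Type} (mu : T -> R) : Prop :=
  (forall x, 0 <= mu x) /\ tsum mu = 1.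

(** policy pi(a|s) = pi s a *)
Definition is_policy {St Ac : Type} (pi : St -> Ac -> R) : Prop :=
  forall s, is_distr (pi s).

(** dynamics q(s'|s,a) = q s a s' *)
Definition is_dynamics {St Ac : Type} (q : St -> Ac -> St -> R) : Prop :=
  forall s a, is_distr (q s a).

Definition TV {T : Type} (mu nu : T -> R) : R :=
  / 2 * tsum (fun x => Rabs (mu x - nu x)).

Definition step {St Ac : Type} (pi : St -> Ac -> R) (q : St -> Ac -> St -> R)
  (nu : St -> R) : St -> R :=
  fun s' => tsum (fun sa : St * Ac =>
                    nu (fst sa) * pi (fst sa) (snd sa) * q (fst sa) (snd sa) s').

Fixpoint state_law {St Ac : Type} (rho0 : St -> R)
  (pi : St -> Ac -> R) (q : St -> Ac -> St -> R) (t : nat) : St -> R :=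
  match t with
  | O => rho0
  | Datatypes.S t' => step pi q (state_law rho0 pi q t')
  end.

Definition eta {St Ac : Type} (rho0 : St -> R) (gamma : R) (r : St -> Ac -> R)
  (pi : St -> Ac -> R) (q : St -> Ac -> St -> R) : R :=
  tsum (fun t : nat =>
    gamma ^ t * tsum (fun sa : St * Ac =>
      state_law rho0 pi q t (fst sa) * pi (fst sa) (snd sa) * r (fst sa) (snd sa))).

Fixpoint branch_law_aux {St Ac : Type} (rho0 : St -> R)
  (pipre : St -> Ac -> R) (qpre : St -> Ac -> St -> R)
  (pipost : St -> Ac -> R) (qpost : St -> Ac -> St -> R)
  (m i : nat) : St -> R :=
  match i with
  | O => rho0
  | Datatypes.S i' =>
      if Nat.ltb i' m
      then step pipre qpre (branch_law_aux rho0 pipre qpre pipost qpost m i')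
      else step pipost qpost (branch_law_aux rho0 pipre qpre pipost qpost m i')
  end.

(** nu_{t,i}: law of s_i in the branched construction for time t,
    with m_t = max(t-k,0) = (t - k)%nat (truncated subtraction). *)
Definition branch_law {St Ac : Type} (rho0 : St -> R)
  (pipre : St -> Ac -> R) (qpre : St -> Ac -> St -> R)
  (pipost : St -> Ac -> R) (qpost : St -> Ac -> St -> R)
  (k t i : nat) : St -> R :=
  branch_law_aux rho0 pipre qpre pipost qpost (t - k)%nat i.

Definition branch_d {St Ac : Type} (rho0 : St -> R)
  (pipre : St -> Ac -> R) (qpre : St -> Ac -> St -> R)
  (pipost : St -> Ac -> R) (qpost : St -> Ac -> St -> R)
  (k t : nat) : St * Ac -> R :=
  fun sa => branch_law rho0 pipre qpre pipost qpost k t t (fst sa)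
            * pipost (fst sa) (snd sa).

Definition eta_k {St Ac : Type} (rho0 : St -> R) (gamma : R) (r : St -> Ac -> R)
  (pipre : St -> Ac -> R) (qpre : St -> Ac -> St -> R)
  (pipost : St -> Ac -> R) (qpost : St -> Ac -> St -> R) (k : nat) : R :=
  tsum (fun t : nat =>
    gamma ^ t * tsum (fun sa : St * Ac =>
      branch_d rho0 pipre qpre pipost qpost k t sa * r (fst sa) (snd sa))).

From Stdlib Require Import Reals.
From Stdlib Require Import List Lra Lia Classical ClassicalEpsilon FunctionalExtensionality.
Open Scope R_scope.

(* The state law of the true on-policy rollout and of the branched model rollout are
   compared at each time t through an intermediate rollout that follows (piD, p) up to
   time t - k and then (pi, p).  A one-step stability estimate for the l1 distance
   (step_l1) shows that each pre-branch step adds at most 2 eps_pi of policy mismatch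
   (policy_drift) and each post-branch step at most 2 eps_m of model error
   (model_drift).  Since expected rewards are rmax-Lipschitz in the state law
   (value_l1), the reward gap at time t is at most
   rmax (2 (t - k) eps_pi + 2 k eps_m); summing with discount gamma^t gives the bound. *)

Lemma fsum_app {T} (f : T -> R) l1 l2 : fsum f (l1 ++ l2) = fsum f l1 + fsum f l2.
Proof. induction l1; simpl; [lra|]. rewrite IHl1; lra. Qed.

Lemma fsum_map {T U} (f : U -> R) (g : T -> U) l :
  fsum f (map g l) = fsum (fun x => f (g x)) l.
Proof. induction l; simpl; auto. rewrite IHl; auto. Qed.

Lemma fsum_le {T} (f g : T -> R) l :
  (forall x, In x l -> f x <= g x) -> fsum f l <= fsum g l.
Proof.
  induction l as [|x l IH]; simpl; intro H; [lra|].
  assert (f x <= g x) by auto. assert (fsum f l <= fsum g l) by auto. lra.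
Qed.

Lemma fsum_ext_in {T} (f g : T -> R) l :
  (forall x, In x l -> f x = g x) -> fsum f l = fsum g l.
Proof.
  intro H; induction l as [|x l IH]; simpl; auto.
  rewrite IH, H; simpl; auto. intros; apply H; simpl; auto.
Qed.

Lemma fsum_ge0 {T} (f : T -> R) l : (forall x, 0 <= f x) -> 0 <= fsum f l.
Proof. intro H; induction l as [|x l IH]; simpl; [lra|]. specialize (H x); lra. Qed.

Lemma fsum_plus {T} (f g : T -> R) l :
  fsum (fun x => f x + g x) l = fsum f l + fsum g l.
Proof. induction l; simpl; [lra|]. rewrite IHl; lra. Qed.

Lemma fsum_scal {T} (f : T -> R) c l : fsum (fun x => c * f x) l = c * fsum f l.
Proof. induction l; simpl; [lra|]. rewrite IHl; lra. Qed.

Lemma fsum_zero {T} (l : list T) : fsum (fun _ => 0) l = 0.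
Proof. induction l; simpl; [lra|]. rewrite IHl; lra. Qed.

Lemma fsum_incl {T} (f : T -> R) l1 l2 :
  (forall x, 0 <= f x) -> NoDup l1 -> incl l1 l2 -> fsum f l1 <= fsum f l2.
Proof.
  intros Hf H1. revert l2. induction H1 as [|x l1 Hx H1 IH]; intros l2 Hi; simpl.
  - apply fsum_ge0; auto.
  - destruct (in_split x l2 (Hi x (or_introl eq_refl))) as [a [b ->]].
    assert (Hsub : fsum f l1 <= fsum f (a ++ b)).
    { apply IH. intros y Hy.
      destruct (in_app_or _ _ _ (Hi y (or_intror Hy))) as [H|[H|H]];
        apply in_or_app; auto; subst; contradiction. }
    rewrite fsum_app in *. simpl. lra.
Qed.

Lemma NoDup_prod {X Y} (xs : list X) (ys : list Y) :
  NoDup xs -> NoDup ys -> NoDup (list_prod xs ys).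
Proof.
  intros Hx Hy. induction Hx as [|x xs Hn Hx IH]; simpl; [constructor|].
  apply NoDup_app; auto.
  - apply NoDup_map_NoDup_ForallPairs; auto. intros a b _ _ E. congruence.
  - intros [a b] Ha Hb. apply in_map_iff in Ha. destruct Ha as [y [E _]].
    inversion E; subst. apply in_prod_iff in Hb. tauto.
Qed.

Lemma fsum_prod {X Y} (f : X * Y -> R) xs ys :
  fsum f (list_prod xs ys) = fsum (fun x => fsum (fun y => f (x, y)) ys) xs.
Proof. induction xs; simpl; auto. rewrite fsum_app, fsum_map, IHxs. auto. Qed.

Lemma fsum_comm {X Y} (f : X -> Y -> R) xs ys :
  fsum (fun y => fsum (fun x => f x y) xs) ys = fsum (fun x => fsum (fun y => f x y) ys) xs.
Proof. induction xs; simpl; [apply fsum_zero|]. rewrite fsum_plus, IHxs. auto. Qed.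

Definition summable {T} (f : T -> R) : Prop := bound (psums f).

Definition classic_eq_dec {A : Type} (x y : A) : {x = y} + {x <> y} :=
  excluded_middle_informative (x = y).

Section NonnegSums.
Context {T : Type}.
Implicit Types f g : T -> R.

Lemma psum_is_lub f : summable f -> is_lub (psums f) (psum f).
Proof.
  intro H. unfold psum.
  destruct (excluded_middle_informative (bound (psums f))) as [hb|hn]; [|contradiction].
  exact (proj2_sig (completeness _ hb (psums_0 f))).
Qed.

Lemma fsum_le_psum f l : summable f -> NoDup l -> fsum f l <= psum f.
Proof. intros H Hl. apply (proj1 (psum_is_lub f H)). exists l; auto. Qed.

Lemma psum_le_of_fsum f C :
  (forall l, NoDup l -> fsum f l <= C) -> summable f /\ psum f <= C.
Proof.
  intro H. assert (Hs : summable f) by (exists C; intros x [l [Hl ->]]; auto).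
  split; auto. apply (proj2 (psum_is_lub f Hs)). intros x [l [Hl ->]]; auto.
Qed.

Lemma psum_ge0 f : 0 <= psum f.
Proof.
  unfold psum. destruct (excluded_middle_informative (bound (psums f))) as [hb|]; [|lra].
  apply (proj1 (proj2_sig (completeness _ hb (psums_0 f)))).
  exists nil. split; [constructor|reflexivity].
Qed.

Lemma psum_ext f g : (forall x, f x = g x) -> psum f = psum g.
Proof. intro H. f_equal. apply functional_extensionality; auto. Qed.

Lemma summable_ext f g : (forall x, f x = g x) -> summable f -> summable g.
Proof. intro H. replace g with f; auto. apply functional_extensionality; auto. Qed.

Lemma psum_le f g :
  (forall x, f x <= g x) -> summable g -> summable f /\ psum f <= psum g.
Proof.
  intros H Hg. apply psum_le_of_fsum. intros l Hl.
  apply Rle_trans with (fsum g l); [apply fsum_le; auto|apply fsum_le_psum; auto].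
Qed.

Lemma psum_zero : summable (fun _ : T => 0) /\ psum (fun _ : T => 0) = 0.
Proof.
  destruct (psum_le_of_fsum (fun _ : T => 0) 0) as [S L].
  { intros l _; rewrite fsum_zero; lra. }
  split; auto. pose proof (psum_ge0 (fun _ : T => 0)); lra.
Qed.

Lemma psum_add f g : (forall x, 0 <= f x) -> (forall x, 0 <= g x) ->
  summable f -> summable g ->
  summable (fun x => f x + g x) /\ psum (fun x => f x + g x) = psum f + psum g.
Proof.
  intros Hf Hg Sf Sg.
  destruct (psum_le_of_fsum (fun x => f x + g x) (psum f + psum g)) as [S Le].
  { intros l Hl. rewrite fsum_plus.
    pose proof (fsum_le_psum f l Sf Hl). pose proof (fsum_le_psum g l Sg Hl). lra. }
  split; auto.
  (* Conversely, two partial sums of [f] and [g] are dominated by one partial sum of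
     [f + g] over the union of their index lists. *)
  assert (psum f <= psum (fun x => f x + g x) - psum g); [|lra].
  apply psum_le_of_fsum. intros l1 Hl1.
  assert (psum g <= psum (fun x => f x + g x) - fsum f l1); [|lra].
  apply psum_le_of_fsum. intros l2 Hl2.
  set (l := nodup classic_eq_dec (l1 ++ l2)).
  assert (Hl : NoDup l) by apply NoDup_nodup.
  assert (fsum f l1 <= fsum f l).
  { apply fsum_incl; auto. intros y Hy. apply nodup_In, in_or_app; auto. }
  assert (fsum g l2 <= fsum g l).
  { apply fsum_incl; auto. intros y Hy. apply nodup_In, in_or_app; auto. }
  pose proof (fsum_le_psum _ l S Hl). rewrite fsum_plus in *. lra.
Qed.

Lemma psum_scal f c : 0 <= c -> summable f ->
  summable (fun x => c * f x) /\ psum (fun x => c * f x) = c * psum f.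
Proof.
  intros Hc Sf.
  destruct (psum_le_of_fsum (fun x => c * f x) (c * psum f)) as [S Le].
  { intros l Hl. rewrite fsum_scal. apply Rmult_le_compat_l; auto. apply fsum_le_psum; auto. }
  split; auto.
  destruct (Req_dec c 0) as [->|Hc0].
  - rewrite Rmult_0_l in *. pose proof (psum_ge0 (fun x => 0 * f x)). lra.
  - assert (Hge : psum f <= psum (fun x => c * f x) / c).
    { apply psum_le_of_fsum. intros l Hl. pose proof (fsum_le_psum _ l S Hl) as H.
      rewrite fsum_scal in H. apply (Rmult_le_reg_l c); [lra|]. field_simplify; lra. }
    apply (Rmult_le_compat_l c) in Hge; [|lra]. field_simplify in Hge; lra.
Qed.

Lemma psum_fsum {I} (f : I -> T -> R) (is : list I) :
  (forall i x, 0 <= f i x) -> (forall i, summable (f i)) ->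
  summable (fun x => fsum (fun i => f i x) is) /\
  psum (fun x => fsum (fun i => f i x) is) = fsum (fun i => psum (f i)) is.
Proof.
  intros Hf Sf. induction is as [|i is [S IH]]; simpl; [apply psum_zero|].
  destruct (psum_add (f i) (fun x => fsum (fun i => f i x) is)) as [S' E]; auto.
  { intro; apply fsum_ge0; auto. }
  split; auto. rewrite E, IH. auto.
Qed.

Lemma summable_abs_sub f g : (forall x, 0 <= f x) -> (forall x, 0 <= g x) ->
  summable f -> summable g -> summable (fun x => Rabs (f x - g x)).
Proof.
  intros Hf Hg Sf Sg. apply (psum_le _ (fun x => f x + g x)); [|apply psum_add; auto].
  intro x. specialize (Hf x); specialize (Hg x). unfold Rabs; destruct Rcase_abs; lra.
Qed.

Lemma psum_abs_sub f g : (forall x, 0 <= f x) -> (forall x, 0 <= g x) ->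
  summable f -> summable g ->
  Rabs (psum f - psum g) <= psum (fun x => Rabs (f x - g x)).
Proof.
  intros Hf Hg Sf Sg.
  pose proof (summable_abs_sub f g Hf Hg Sf Sg) as Sd.
  set (d := fun x => Rabs (f x - g x)) in *.
  assert (Hd : forall x, 0 <= d x) by (intros; apply Rabs_pos).
  destruct (psum_add g d Hg Hd Sg Sd) as [S1 E1].
  destruct (psum_add f d Hf Hd Sf Sd) as [S2 E2].
  destruct (psum_le f (fun x => g x + d x)) as [_ L1]; auto.
  { intro x. unfold d, Rabs; destruct Rcase_abs; lra. }
  destruct (psum_le g (fun x => f x + d x)) as [_ L2]; auto.
  { intro x. unfold d, Rabs; destruct Rcase_abs; lra. }
  apply Rabs_le. lra.
Qed.

End NonnegSums.

Section Fubini.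
Context {X Y : Type}.

Lemma psum_prod_le (F : X * Y -> R) (g : X -> R) :
  (forall z, 0 <= F z) -> (forall x, summable (fun y => F (x, y))) ->
  (forall x, psum (fun y => F (x, y)) <= g x) -> summable g ->
  summable F /\ psum F <= psum g.
Proof.
  intros HF Srow Hrow Sg. apply psum_le_of_fsum. intros L HL.
  set (xs := nodup classic_eq_dec (map fst L)). set (ys := nodup classic_eq_dec (map snd L)).
  assert (Hbox : fsum F L <= fsum F (list_prod xs ys)).
  { apply fsum_incl; auto. intros [x y] H. apply in_prod_iff.
    split; apply nodup_In; [apply (in_map fst L (x, y))|apply (in_map snd L (x, y))]; auto. }
  rewrite fsum_prod in Hbox. eapply Rle_trans; [apply Hbox|].
  eapply Rle_trans; [|apply (fsum_le_psum g xs Sg (NoDup_nodup _ _))].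
  apply fsum_le. intros x _. eapply Rle_trans; [|apply Hrow].
  apply fsum_le_psum; auto. apply NoDup_nodup.
Qed.

Lemma psum_iter_le (F : X * Y -> R) : (forall z, 0 <= F z) -> summable F ->
  (forall x, summable (fun y => F (x, y))) /\ summable (fun x => psum (fun y => F (x, y))) /\
  psum (fun x => psum (fun y => F (x, y))) <= psum F.
Proof.
  intros HF SF.
  assert (Srow : forall x, summable (fun y => F (x, y))).
  { intro x. apply (psum_le_of_fsum _ (psum F)). intros ys Hys.
    rewrite <- (fsum_map F (pair x)). apply fsum_le_psum; auto.
    apply NoDup_map_NoDup_ForallPairs; auto. intros a b _ _ E; congruence. }
  split; auto. apply psum_le_of_fsum. intros xs Hxs.
  destruct (psum_fsum (fun x y => F (x, y)) xs) as [_ <-]; auto.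
  apply psum_le_of_fsum. intros ys Hys.
  rewrite (fsum_comm (fun x y => F (x, y))), <- fsum_prod.
  apply fsum_le_psum; auto. apply NoDup_prod; auto.
Qed.

Lemma NoDup_map_swap {A B} (l : list (A * B)) :
  NoDup l -> NoDup (map (fun z => (snd z, fst z)) l).
Proof.
  intro Hl. apply NoDup_map_NoDup_ForallPairs; auto.
  intros [a b] [c d] _ _ E. simpl in E; congruence.
Qed.

Lemma psum_swap (F : X * Y -> R) : summable F ->
  summable (fun z : Y * X => F (snd z, fst z)) /\
  psum (fun z : Y * X => F (snd z, fst z)) = psum F.
Proof.
  intro SF.
  destruct (psum_le_of_fsum (fun z : Y * X => F (snd z, fst z)) (psum F)) as [S Le].
  { intros l Hl. rewrite <- (fsum_map F (fun z => (snd z, fst z))).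
    apply fsum_le_psum; auto. apply NoDup_map_swap; auto. }
  split; auto. apply Rle_antisym; auto.
  apply psum_le_of_fsum. intros l Hl.
  replace (fsum F l)
    with (fsum (fun z : Y * X => F (snd z, fst z)) (map (fun z => (snd z, fst z)) l)).
  - apply fsum_le_psum; auto. apply NoDup_map_swap; auto.
  - rewrite fsum_map. apply fsum_ext_in. intros [a b] _; auto.
Qed.

End Fubini.

Lemma psum_marginal {X Y} (F : X * Y -> R) : (forall z, 0 <= F z) -> summable F ->
  (forall y, summable (fun x => F (x, y))) /\ summable (fun y => psum (fun x => F (x, y))) /\
  psum (fun y => psum (fun x => F (x, y))) = psum F.
Proof.
  intros HF SF. destruct (psum_swap F SF) as [S <-].
  set (G := fun z : Y * X => F (snd z, fst z)) in *.
  destruct (psum_iter_le G (fun z => HF _) S) as [Scol [Sm Le]].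
  repeat split; auto. apply Rle_antisym; auto.
  apply (psum_prod_le G (fun y => psum (fun x => G (y, x)))); auto using Rle_refl.
  intro; apply HF.
Qed.

Lemma tsum_nonneg {T} (f : T -> R) : (forall x, 0 <= f x) -> tsum f = psum f.
Proof.
  intro H. unfold tsum.
  rewrite (psum_ext (fun x => Rmax (f x) 0) f), (psum_ext (fun x => Rmax (- f x) 0) (fun _ => 0)).
  - rewrite (proj2 psum_zero); lra.
  - intro x; specialize (H x); unfold Rmax; destruct Rle_dec; lra.
  - intro x; specialize (H x); unfold Rmax; destruct Rle_dec; lra.
Qed.

Lemma Rabs_tsum_sub_le {T} (h h' : T -> R) :
  summable (fun x => Rabs (h x)) -> summable (fun x => Rabs (h' x)) ->
  Rabs (tsum h - tsum h') <= psum (fun x => Rabs (h x - h' x)).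
Proof.
  intros S S'. unfold tsum.
  assert (Hpos : forall y, 0 <= Rmax y 0) by (intro; apply Rmax_r).
  assert (Hle : forall y, Rmax y 0 <= Rabs y /\ Rmax (- y) 0 <= Rabs y).
  { intro y; unfold Rmax, Rabs; destruct Rle_dec, Rle_dec, Rcase_abs; lra. }
  assert (Sp : forall g : T -> R, summable (fun x => Rabs (g x)) ->
            summable (fun x => Rmax (g x) 0) /\ summable (fun x => Rmax (- g x) 0)).
  { intros g Sg. split; eapply psum_le; eauto; intro x; apply Hle. }
  destruct (Sp h S) as [SP SN]. destruct (Sp h' S') as [SP' SN'].
  (* Regroup as the difference of two nonnegative sums. *)
  destruct (psum_add _ _ (fun x => Hpos (h x)) (fun x => Hpos (- h' x)) SP SN') as [S1 E1].
  destruct (psum_add _ _ (fun x => Hpos (- h x)) (fun x => Hpos (h' x)) SN SP') as [S2 E2].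
  replace (_ - _ - _) with (psum (fun x => Rmax (h x) 0 + Rmax (- h' x) 0)
                            - psum (fun x => Rmax (- h x) 0 + Rmax (h' x) 0)) by lra.
  eapply Rle_trans; [apply psum_abs_sub; auto|].
  - intro; apply Rplus_le_le_0_compat; apply Hpos.
  - intro; apply Rplus_le_le_0_compat; apply Hpos.
  - right. apply psum_ext. intro x. f_equal.
    unfold Rmax; destruct Rle_dec, Rle_dec, Rle_dec, Rle_dec; lra.
Qed.

Lemma Rabs_tsum_le {T} (h : T -> R) :
  summable (fun x => Rabs (h x)) -> Rabs (tsum h) <= psum (fun x => Rabs (h x)).
Proof.
  intro S. pose proof (proj1 (@psum_zero T)) as S0.
  assert (S0' : summable (fun _ : T => Rabs 0)).
  { apply (summable_ext (fun _ => 0)); auto. intro; rewrite Rabs_R0; auto. }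
  pose proof (Rabs_tsum_sub_le h (fun _ => 0) S S0') as L.
  rewrite (tsum_nonneg (fun _ : T => 0)), (proj2 psum_zero), Rminus_0_r in L by (intro; lra).
  rewrite (psum_ext _ (fun x => Rabs (h x))) in L; auto.
  intro; rewrite Rminus_0_r; auto.
Qed.

Definition prob {T} (mu : T -> R) : Prop :=
  (forall x, 0 <= mu x) /\ summable mu /\ psum mu = 1.

Lemma distr_prob {T} (mu : T -> R) : is_distr mu -> prob mu.
Proof.
  intros [Hnn Hsum]. rewrite tsum_nonneg in Hsum; auto. repeat split; auto.
  unfold psum in Hsum. destruct (excluded_middle_informative (bound (psums mu))); auto. lra.
Qed.

Lemma policy_prob {St Ac} (pi : St -> Ac -> R) s : is_policy pi -> prob (pi s).
Proof. intro H; apply distr_prob, H. Qed.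

Lemma dynamics_prob {St Ac} (q : St -> Ac -> St -> R) s a : is_dynamics q -> prob (q s a).
Proof. intro H; apply distr_prob, H. Qed.

Lemma prob_inhabited {T} (mu : T -> R) : prob mu -> inhabited T.
Proof.
  intros [_ [_ E]]. apply NNPP. intro N.
  assert (psum mu <= 0); [|lra].
  apply psum_le_of_fsum. intros [|x l] _; simpl; [lra|]. exfalso; apply N; constructor; auto.
Qed.

Definition l1dist {T} (mu nu : T -> R) : R := psum (fun x => Rabs (mu x - nu x)).

Section L1Distance.
Context {T : Type}.
Implicit Types mu nu : T -> R.

Lemma TV_l1dist mu nu : TV mu nu = l1dist mu nu / 2.
Proof. unfold TV, l1dist. rewrite tsum_nonneg by (intro; apply Rabs_pos). lra. Qed.

Lemma l1dist_self mu : l1dist mu mu = 0.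
Proof.
  unfold l1dist. rewrite (psum_ext _ (fun _ => 0)); [apply psum_zero|].
  intro; rewrite Rminus_diag, Rabs_R0; auto.
Qed.

Lemma l1dist_sym mu nu : l1dist mu nu = l1dist nu mu.
Proof. unfold l1dist. apply psum_ext. intro; apply Rabs_minus_sym. Qed.

Lemma prob_summable_abs_sub mu nu : prob mu -> prob nu ->
  summable (fun x => Rabs (mu x - nu x)).
Proof. intros [H1 [S1 _]] [H2 [S2 _]]. apply summable_abs_sub; auto. Qed.

Lemma l1dist_le2 mu nu : prob mu -> prob nu -> l1dist mu nu <= 2.
Proof.
  intros [H1 [S1 E1]] [H2 [S2 E2]].
  destruct (psum_add mu nu H1 H2 S1 S2) as [S E].
  destruct (psum_le (fun x => Rabs (mu x - nu x)) (fun x => mu x + nu x)) as [_ L]; auto.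
  { intro x; specialize (H1 x); specialize (H2 x); unfold Rabs; destruct Rcase_abs; lra. }
  unfold l1dist. lra.
Qed.

Lemma l1dist_triangle mu nu xi : prob mu -> prob nu -> prob xi ->
  l1dist mu xi <= l1dist mu nu + l1dist nu xi.
Proof.
  intros Dm Dn Dx.
  destruct (psum_add _ _ (fun x => Rabs_pos (mu x - nu x)) (fun x => Rabs_pos (nu x - xi x))
              (prob_summable_abs_sub _ _ Dm Dn) (prob_summable_abs_sub _ _ Dn Dx)) as [S E].
  assert (Hpt : forall x, Rabs (mu x - xi x) <= Rabs (mu x - nu x) + Rabs (nu x - xi x)).
  { intro x. replace (mu x - xi x) with ((mu x - nu x) + (nu x - xi x)) by ring.
    apply Rabs_triang. }
  destruct (psum_le _ _ Hpt S) as [_ L]. unfold l1dist. lra.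
Qed.

End L1Distance.

Lemma psum_weighted_le {X} (w h : X -> R) C :
  (forall x, 0 <= w x) -> summable w -> 0 <= C -> (forall x, h x <= C) ->
  summable (fun x => w x * h x) /\ psum (fun x => w x * h x) <= C * psum w.
Proof.
  intros Hw Sw HC Hh. destruct (psum_scal w C HC Sw) as [S <-].
  apply psum_le; auto. intro x. rewrite Rmult_comm. apply Rmult_le_compat_r; auto.
Qed.

Lemma psum_abs_weighted_le {X} (w h : X -> R) C :
  (forall x, 0 <= w x) -> summable w -> 0 <= C -> (forall x, Rabs (h x) <= C) ->
  summable (fun x => Rabs (w x * h x)) /\ psum (fun x => Rabs (w x * h x)) <= C * psum w.
Proof.
  intros Hw Sw HC Hh.
  assert (E : forall x, Rabs (w x * h x) = w x * Rabs (h x)).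
  { intro x. rewrite Rabs_mult, Rabs_pos_eq; auto. }
  destruct (psum_weighted_le w (fun x => Rabs (h x)) C) as [S L]; auto.
  rewrite (psum_ext _ _ E). split; auto.
  apply (summable_ext _ _ (fun x => eq_sym (E x)) S).
Qed.

Definition mix {X Y} (w : X -> R) (K : X -> Y -> R) : X * Y -> R :=
  fun z => w (fst z) * K (fst z) (snd z).

Section Mixtures.
Context {X Y : Type}.
Implicit Types (w : X -> R) (K : X -> Y -> R).

Lemma mix_nonneg w K : (forall x, 0 <= w x) -> (forall x, prob (K x)) ->
  forall z, 0 <= mix w K z.
Proof. intros Hw HK [x y]. apply Rmult_le_pos; [apply Hw|apply HK]. Qed.

Lemma mix_mass w K : (forall x, 0 <= w x) -> summable w -> (forall x, prob (K x)) ->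
  summable (mix w K) /\ psum (mix w K) = psum w.
Proof.
  intros Hw Sw HK.
  assert (Hrow : forall x, summable (fun y => mix w K (x, y)) /\
                           psum (fun y => mix w K (x, y)) = w x).
  { intro x. destruct (HK x) as [_ [SK EK]].
    destruct (psum_scal (K x) (w x) (Hw x) SK) as [S E].
    split; auto. unfold mix; simpl. rewrite E, EK; ring. }
  pose proof (mix_nonneg w K Hw HK) as Hnn.
  destruct (psum_prod_le (mix w K) w Hnn (fun x => proj1 (Hrow x))) as [S Le]; auto.
  { intro x; right; apply Hrow. }
  split; auto. apply Rle_antisym; auto.
  destruct (psum_iter_le (mix w K) Hnn S) as [_ [_ Ge]].
  rewrite (psum_ext _ w) in Ge; auto. intro; apply Hrow.
Qed.

Lemma mix_l1 w1 w2 K1 K2 :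
  (forall x, 0 <= w1 x) -> (forall x, 0 <= w2 x) -> summable w1 -> summable w2 ->
  (forall x, prob (K1 x)) -> (forall x, prob (K2 x)) ->
  psum (fun z => Rabs (mix w1 K1 z - mix w2 K2 z))
  <= l1dist w1 w2 + psum (fun x => w1 x * l1dist (K1 x) (K2 x)).
Proof.
  intros Hw1 Hw2 Sw1 Sw2 HK1 HK2.
  set (g := fun x => Rabs (w1 x - w2 x) + w1 x * l1dist (K1 x) (K2 x)).
  assert (Hrow : forall x, summable (fun y => Rabs (mix w1 K1 (x, y) - mix w2 K2 (x, y))) /\
                 psum (fun y => Rabs (mix w1 K1 (x, y) - mix w2 K2 (x, y))) <= g x).
  { intro x. destruct (HK2 x) as [HK [SK EK]].
    pose proof (prob_summable_abs_sub _ _ (HK1 x) (HK2 x)) as Sd.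
    destruct (psum_scal _ (Rabs (w1 x - w2 x)) (Rabs_pos _) SK) as [Sa Ea].
    destruct (psum_scal _ (w1 x) (Hw1 x) Sd) as [Sb Eb].
    destruct (psum_add _ _ (fun y => Rmult_le_pos _ _ (Rabs_pos (w1 x - w2 x)) (HK y))
                (fun y => Rmult_le_pos _ _ (Hw1 x) (Rabs_pos (K1 x y - K2 x y))) Sa Sb) as [S E].
    assert (Hpt : forall y, Rabs (mix w1 K1 (x, y) - mix w2 K2 (x, y))
                  <= Rabs (w1 x - w2 x) * K2 x y + w1 x * Rabs (K1 x y - K2 x y)).
    { intro y. unfold mix; simpl.
      replace (w1 x * K1 x y - w2 x * K2 x y)
        with ((w1 x - w2 x) * K2 x y + w1 x * (K1 x y - K2 x y)) by ring.
      eapply Rle_trans; [apply Rabs_triang|].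
      rewrite !Rabs_mult, (Rabs_pos_eq (K2 x y)), (Rabs_pos_eq (w1 x)); auto. apply Rle_refl. }
    destruct (psum_le _ _ Hpt S) as [S' L]. split; auto.
    rewrite E, Ea, Eb, EK in L. unfold g, l1dist. lra. }
  assert (Hwd : forall x, 0 <= w1 x * l1dist (K1 x) (K2 x)).
  { intro; apply Rmult_le_pos; [apply Hw1|apply psum_ge0]. }
  destruct (psum_weighted_le w1 (fun x => l1dist (K1 x) (K2 x)) 2) as [Swd _]; auto; try lra.
  { intro; apply l1dist_le2; auto. }
  destruct (psum_add (fun x => Rabs (w1 x - w2 x)) _ (fun x => Rabs_pos _) Hwd
              (summable_abs_sub w1 w2 Hw1 Hw2 Sw1 Sw2) Swd) as [Sg Eg].
  destruct (psum_prod_le (fun z => Rabs (mix w1 K1 z - mix w2 K2 z)) g) as [_ L];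
    auto using Rabs_pos; try apply Hrow.
  unfold g in L. rewrite Eg in L. exact L.
Qed.

End Mixtures.

Lemma marginal_l1 {X Y} (F1 F2 : X * Y -> R) :
  (forall z, 0 <= F1 z) -> (forall z, 0 <= F2 z) -> summable F1 -> summable F2 ->
  l1dist (fun y => psum (fun x => F1 (x, y))) (fun y => psum (fun x => F2 (x, y)))
  <= psum (fun z => Rabs (F1 z - F2 z)).
Proof.
  intros H1 H2 S1 S2.
  pose proof (summable_abs_sub F1 F2 H1 H2 S1 S2) as Sd.
  destruct (psum_marginal F1 H1 S1) as [C1 _].
  destruct (psum_marginal F2 H2 S2) as [C2 _].
  destruct (psum_marginal (fun z => Rabs (F1 z - F2 z)) (fun z => Rabs_pos _) Sd)
    as [_ [Sm <-]].
  apply psum_le; auto.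
  intro y. apply psum_abs_sub; auto.
Qed.

Section Step.
Context {St Ac : Type}.

Definition sa_kernel (q : St -> Ac -> St -> R) : St * Ac -> St -> R :=
  fun sa => q (fst sa) (snd sa).

(* [mix nu pi] is the law of (s, a); the next-state law is the second marginal of
   [mix (mix nu pi) (sa_kernel q)]. *)
Lemma step_marginal (pi : St -> Ac -> R) q nu s' :
  (forall s, 0 <= nu s) -> is_policy pi -> is_dynamics q ->
  step pi q nu s' = psum (fun sa => mix (mix nu pi) (sa_kernel q) (sa, s')).
Proof.
  intros Hnu Hpi Hq. apply tsum_nonneg. intro sa.
  apply (mix_nonneg (mix nu pi) (sa_kernel q) (mix_nonneg nu pi Hnu (fun s => policy_prob pi s Hpi))
           (fun sa => dynamics_prob q (fst sa) (snd sa) Hq) (sa, s')).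
Qed.

Lemma step_prob (pi : St -> Ac -> R) q nu :
  prob nu -> is_policy pi -> is_dynamics q -> prob (step pi q nu).
Proof.
  intros [Hnu [Snu Enu]] Hpi Hq.
  pose proof (fun s => policy_prob pi s Hpi) as Ppi.
  pose proof (fun sa => dynamics_prob q (fst sa) (snd sa) Hq : prob (sa_kernel q sa)) as Pq.
  pose proof (mix_nonneg nu pi Hnu Ppi) as H1. pose proof (mix_nonneg _ _ H1 Pq) as H2.
  destruct (mix_mass nu pi Hnu Snu Ppi) as [S1 E1].
  destruct (mix_mass _ _ H1 S1 Pq) as [S2 E2].
  destruct (psum_marginal _ H2 S2) as [_ [Sm Em]].
  rewrite <- (psum_ext (step pi q nu) _ (fun s' => step_marginal pi q nu s' Hnu Hpi Hq)) in Em.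
  repeat split.
  - intro s'. rewrite step_marginal; auto. apply psum_ge0.
  - apply (summable_ext _ _ (fun s' => eq_sym (step_marginal pi q nu s' Hnu Hpi Hq)) Sm).
  - rewrite Em, E2, E1; auto.
Qed.

Lemma step_l1 (pi1 pi2 : St -> Ac -> R) (q1 q2 : St -> Ac -> St -> R) nu1 nu2 :
  prob nu1 -> prob nu2 -> is_policy pi1 -> is_policy pi2 ->
  is_dynamics q1 -> is_dynamics q2 ->
  l1dist (step pi1 q1 nu1) (step pi2 q2 nu2)
  <= l1dist nu1 nu2 + psum (fun s => nu1 s * l1dist (pi1 s) (pi2 s))
     + psum (fun sa => mix nu1 pi1 sa * l1dist (sa_kernel q1 sa) (sa_kernel q2 sa)).
Proof.
  intros [Hn1 [Sn1 _]] [Hn2 [Sn2 _]] Hp1 Hp2 Hq1 Hq2.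
  pose proof (fun s => policy_prob pi1 s Hp1) as P1.
  pose proof (fun s => policy_prob pi2 s Hp2) as P2.
  pose proof (fun sa => dynamics_prob q1 (fst sa) (snd sa) Hq1 : prob (sa_kernel q1 sa)) as Q1.
  pose proof (fun sa => dynamics_prob q2 (fst sa) (snd sa) Hq2 : prob (sa_kernel q2 sa)) as Q2.
  pose proof (mix_nonneg nu1 pi1 Hn1 P1) as J1. pose proof (mix_nonneg nu2 pi2 Hn2 P2) as J2.
  destruct (mix_mass nu1 pi1 Hn1 Sn1 P1) as [SJ1 _].
  destruct (mix_mass nu2 pi2 Hn2 Sn2 P2) as [SJ2 _].
  unfold l1dist at 1. rewrite (psum_ext _ _ (fun s' => f_equal2 (fun a b => Rabs (a - b))
    (step_marginal pi1 q1 nu1 s' Hn1 Hp1 Hq1) (step_marginal pi2 q2 nu2 s' Hn2 Hp2 Hq2))).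
  eapply Rle_trans; [apply marginal_l1|].
  - apply mix_nonneg; auto.
  - apply mix_nonneg; auto.
  - apply mix_mass; auto.
  - apply mix_mass; auto.
  - eapply Rle_trans; [apply mix_l1; auto|].
    pose proof (mix_l1 nu1 nu2 pi1 pi2 Hn1 Hn2 Sn1 Sn2 P1 P2). unfold l1dist at 1. lra.
Qed.

Lemma psum_mul_l1dist_self {X Y} (w : X -> R) (K : X -> Y -> R) :
  psum (fun x => w x * l1dist (K x) (K x)) = 0.
Proof.
  rewrite (psum_ext _ (fun _ => 0)); [apply psum_zero|].
  intro; rewrite l1dist_self; ring.
Qed.

End Step.

Section Rollouts.
Context {St Ac : Type}.
Variables (rho0 : St -> R) (piD pi : St -> Ac -> R) (p phat : St -> Ac -> St -> R).
Hypotheses (Hrho0 : prob rho0) (HpiD : is_policy piD) (Hpi : is_policy pi)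
           (Hp : is_dynamics p) (Hphat : is_dynamics phat).

Lemma state_law_prob (pi' : St -> Ac -> R) (q : St -> Ac -> St -> R) :
  is_policy pi' -> is_dynamics q -> forall t, prob (state_law rho0 pi' q t).
Proof. intros Hpi' Hq t; induction t; simpl; auto. apply step_prob; auto. Qed.

Lemma branch_law_aux_prob (pi1 : St -> Ac -> R) (q1 : St -> Ac -> St -> R)
  (pi2 : St -> Ac -> R) (q2 : St -> Ac -> St -> R) m :
  is_policy pi1 -> is_dynamics q1 -> is_policy pi2 -> is_dynamics q2 ->
  forall i, prob (branch_law_aux rho0 pi1 q1 pi2 q2 m i).
Proof.
  intros Hp1 Hq1 Hp2 Hq2 i; induction i; simpl; auto.
  destruct (Nat.ltb i m); apply step_prob; auto.
Qed.

Lemma policy_mismatch (nu : St -> R) eps_pi : prob nu -> 0 <= eps_pi ->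
  (forall s, TV (piD s) (pi s) <= eps_pi) ->
  psum (fun s => nu s * l1dist (piD s) (pi s)) <= 2 * eps_pi.
Proof.
  intros [Hn [Sn En]] He Hpol.
  destruct (psum_weighted_le nu (fun s => l1dist (piD s) (pi s)) (2 * eps_pi)) as [_ L];
    auto; [lra| |rewrite En in L; lra].
  intro s. specialize (Hpol s). rewrite TV_l1dist in Hpol. lra.
Qed.

(* Average model mismatch under a state-action law, in the form of the hypothesis. *)
Lemma model_mismatch (nu : St -> R) : prob nu ->
  psum (fun sa => mix nu pi sa * l1dist (sa_kernel p sa) (sa_kernel phat sa))
  = 2 * tsum (fun sa : St * Ac => nu (fst sa) * pi (fst sa) (snd sa)
                                  * TV (p (fst sa) (snd sa)) (phat (fst sa) (snd sa))).
Proof.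
  intros [Hn [Sn _]].
  pose proof (fun s => policy_prob pi s Hpi) as Ppi.
  pose proof (mix_nonneg nu pi Hn Ppi) as Hj.
  destruct (mix_mass nu pi Hn Sn Ppi) as [Sj _].
  assert (Htv : forall sa, 0 <= TV (sa_kernel p sa) (sa_kernel phat sa) <= 1).
  { intros [s a]. rewrite TV_l1dist.
    pose proof (l1dist_le2 _ _ (dynamics_prob p s a Hp) (dynamics_prob phat s a Hphat)).
    pose proof (psum_ge0 (fun x => Rabs (p s a x - phat s a x))).
    unfold sa_kernel, l1dist in *; simpl. lra. }
  destruct (psum_weighted_le (mix nu pi) (fun sa => TV (sa_kernel p sa) (sa_kernel phat sa)) 1)
    as [S _]; auto; try lra; try apply Htv.
  rewrite tsum_nonneg by (intro sa; apply Rmult_le_pos; [apply Hj|apply Htv]).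
  change (psum (fun sa => mix nu pi sa * l1dist (sa_kernel p sa) (sa_kernel phat sa))
          = 2 * psum (fun sa => mix nu pi sa * TV (sa_kernel p sa) (sa_kernel phat sa))).
  rewrite <- (proj2 (psum_scal _ 2 ltac:(lra) S)).
  apply psum_ext. intro sa. rewrite TV_l1dist. field.
Qed.

(* Before the branch point the state law drifts from the on-policy one by at most
   2 eps_pi per step, since only the data-collecting policy differs. *)
Lemma policy_drift eps_pi : 0 <= eps_pi -> (forall s, TV (piD s) (pi s) <= eps_pi) ->
  forall m i, l1dist (branch_law_aux rho0 piD p pi p m i) (state_law rho0 pi p i)
              <= 2 * INR (min i m) * eps_pi.
Proof.
  intros He Hpol m i.
  induction i as [|i IH]; cbn [branch_law_aux state_law].
  - rewrite l1dist_self. simpl. lra.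
  - pose proof (branch_law_aux_prob piD p pi p m HpiD Hp Hpi Hp i) as Db.
    pose proof (state_law_prob pi p Hpi Hp i) as Ds.
    destruct (Nat.ltb i m) eqn:E.
    + apply Nat.ltb_lt in E.
      pose proof (step_l1 piD pi p p _ _ Db Ds HpiD Hpi Hp Hp) as L.
      pose proof (policy_mismatch _ eps_pi Db He Hpol).
      rewrite psum_mul_l1dist_self in L.
      replace (min (S i) m) with (S (min i m)) by lia. rewrite S_INR. lra.
    + apply Nat.ltb_ge in E.
      pose proof (step_l1 pi pi p p _ _ Db Ds Hpi Hpi Hp Hp) as L.
      rewrite !psum_mul_l1dist_self in L.
      replace (min (S i) m) with (min i m) by lia. lra.
Qed.

Lemma model_drift eps_m m t :
  (forall i, (m <= i)%nat -> (i < t)%nat ->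
     tsum (fun sa : St * Ac =>
        branch_law_aux rho0 piD p pi p m i (fst sa) * pi (fst sa) (snd sa)
        * TV (p (fst sa) (snd sa)) (phat (fst sa) (snd sa))) <= eps_m) ->
  forall i, (i <= t)%nat ->
  l1dist (branch_law_aux rho0 piD p pi p m i) (branch_law_aux rho0 piD p pi phat m i)
  <= 2 * INR (i - m) * eps_m.
Proof.
  intros Hmod i.
  induction i as [|i IH]; cbn [branch_law_aux]; intro Hit.
  - rewrite l1dist_self. simpl. lra.
  - pose proof (branch_law_aux_prob piD p pi p m HpiD Hp Hpi Hp i) as Db.
    pose proof (branch_law_aux_prob piD p pi phat m HpiD Hp Hpi Hphat i) as Db'.
    specialize (IH ltac:(lia)).
    destruct (Nat.ltb i m) eqn:E.
    + apply Nat.ltb_lt in E.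
      pose proof (step_l1 piD piD p p _ _ Db Db' HpiD HpiD Hp Hp) as L.
      rewrite !psum_mul_l1dist_self in L.
      replace (i - m)%nat with 0%nat in IH by lia. replace (S i - m)%nat with 0%nat by lia.
      lra.
    + apply Nat.ltb_ge in E.
      pose proof (step_l1 pi pi p phat _ _ Db Db' Hpi Hpi Hp Hphat) as L.
      rewrite psum_mul_l1dist_self, model_mismatch in L by exact Db.
      specialize (Hmod i E ltac:(lia)).
      replace (S i - m)%nat with (S (i - m)) by lia. rewrite S_INR. lra.
Qed.

End Rollouts.

Section Rewards.
Context {St Ac : Type}.
Variables (pi : St -> Ac -> R) (r : St -> Ac -> R) (rmax : R).
Hypotheses (Hpi : is_policy pi) (Hrmax : 0 <= rmax) (Hr : forall s a, Rabs (r s a) <= rmax).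

Definition value (mu : St -> R) : R :=
  tsum (fun sa : St * Ac => mu (fst sa) * pi (fst sa) (snd sa) * r (fst sa) (snd sa)).

Lemma reward_weighted_le (w : St -> R) : (forall s, 0 <= w s) -> summable w ->
  summable (fun sa => Rabs (mix w pi sa * r (fst sa) (snd sa))) /\
  psum (fun sa => Rabs (mix w pi sa * r (fst sa) (snd sa))) <= rmax * psum w.
Proof.
  intros Hw Sw. pose proof (fun s => policy_prob pi s Hpi) as Ppi.
  destruct (mix_mass w pi Hw Sw Ppi) as [Sj <-].
  apply (psum_abs_weighted_le (mix w pi) (fun sa => r (fst sa) (snd sa))); auto.
  apply mix_nonneg; auto.
Qed.

Lemma value_bound mu : prob mu -> Rabs (value mu) <= rmax.
Proof.
  intros [Hm [Sm Em]]. destruct (reward_weighted_le mu Hm Sm) as [S L].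
  unfold value. eapply Rle_trans; [apply Rabs_tsum_le; exact S|].
  eapply Rle_trans; [exact L|]. rewrite Em; lra.
Qed.

Lemma value_l1 mu mu' : prob mu -> prob mu' ->
  Rabs (value mu - value mu') <= rmax * l1dist mu mu'.
Proof.
  intros Dm Dm'. pose proof Dm as [Hm [Sm _]]. pose proof Dm' as [Hm' [Sm' _]].
  pose proof (prob_summable_abs_sub _ _ Dm Dm') as Sd.
  unfold value. eapply Rle_trans; [apply Rabs_tsum_sub_le|].
  - exact (proj1 (reward_weighted_le mu Hm Sm)).
  - exact (proj1 (reward_weighted_le mu' Hm' Sm')).
  - destruct (reward_weighted_le (fun s => Rabs (mu s - mu' s)) (fun s => Rabs_pos _) Sd)
      as [_ L].
    eapply Rle_trans; [right|exact L]. apply psum_ext. intros [s a]. unfold mix; simpl.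
    replace (mu s * pi s a * r s a - mu' s * pi s a * r s a)
      with ((mu s - mu' s) * pi s a * r s a) by ring.
    rewrite !Rabs_mult, Rabs_Rabsolu. reflexivity.
Qed.

End Rewards.

Lemma fsum_seq_S (g : nat -> R) N : fsum g (seq 0 (S N)) = fsum g (seq 0 N) + g N.
Proof. rewrite seq_S, fsum_app. simpl. ring. Qed.

Lemma fsum_le_prefix (g : nat -> R) l : (forall t, 0 <= g t) -> NoDup l ->
  exists N, fsum g l <= fsum g (seq 0 N).
Proof.
  intros Hg Hl. exists (S (list_max l)). apply fsum_incl; auto.
  intros x Hx. apply in_seq. split; [lia|].
  assert (x <= list_max l)%nat; [|lia].
  apply (proj1 (Forall_forall _ l) (proj1 (list_max_le l (list_max l)) (le_n _)) x Hx).
Qed.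

Lemma geometric_fsum x N : fsum (fun t => x ^ t) (seq 0 N) * (1 - x) = 1 - x ^ N.
Proof.
  induction N; [simpl; ring|].
  rewrite fsum_seq_S. simpl. rewrite Rmult_plus_distr_r, IHN. ring.
Qed.

Lemma geometric_fsum_le x N : 0 <= x < 1 -> fsum (fun t => x ^ t) (seq 0 N) <= 1 / (1 - x).
Proof.
  intro H. pose proof (geometric_fsum x N). pose proof (pow_le x N (proj1 H)).
  apply (Rmult_le_reg_r (1 - x)); [lra|]. rewrite H0. field_simplify; lra.
Qed.

Lemma arith_geometric_fsum x N :
  fsum (fun j => INR j * x ^ j) (seq 0 N) * (1 - x) ^ 2
  = x - INR N * x ^ N + (INR N - 1) * x ^ (S N).
Proof.
  induction N; [simpl; ring|].
  rewrite fsum_seq_S, Rmult_plus_distr_r, IHN, S_INR. simpl. ring.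
Qed.

Lemma arith_geometric_fsum_le x N : 0 <= x < 1 ->
  fsum (fun j => INR j * x ^ j) (seq 0 N) <= x / (1 - x) ^ 2.
Proof.
  intro H. pose proof (arith_geometric_fsum x N). pose proof (pow_le x N (proj1 H)).
  assert ((1 - x) ^ 2 > 0) by (apply pow_lt; lra).
  apply (Rmult_le_reg_r ((1 - x) ^ 2)); auto. rewrite H0. field_simplify; [|lra].
  simpl. pose proof (pos_INR N).
  assert (INR N * x ^ N * (1 - x) + x ^ N * x >= 0).
  { apply Rle_ge, Rplus_le_le_0_compat; repeat apply Rmult_le_pos; lra. }
  nra.
Qed.

Lemma fsum_seq_shift (g : nat -> R) m N :
  fsum g (seq m N) = fsum (fun j => g (m + j)%nat) (seq 0 N).
Proof. induction N; auto. rewrite !seq_S, !fsum_app, IHN. simpl. ring. Qed.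

(* The terms with t < k vanish, the others form a shifted arithmetico-geometric sum. *)
Lemma shifted_arith_geometric_fsum_le x k N : 0 <= x < 1 ->
  fsum (fun t => INR (t - k) * x ^ t) (seq 0 N) <= x ^ (k + 1) / (1 - x) ^ 2.
Proof.
  intro H.
  assert (Hn : forall t, 0 <= INR (t - k) * x ^ t).
  { intro; apply Rmult_le_pos; [apply pos_INR|apply pow_le; lra]. }
  apply Rle_trans with (fsum (fun t => INR (t - k) * x ^ t) (seq 0 (k + N))).
  { apply fsum_incl; auto; [apply seq_NoDup|].
    intros y Hy; apply in_seq in Hy; apply in_seq; lia. }
  rewrite seq_app, fsum_app, (fsum_ext_in _ (fun _ => 0) (seq 0 k)), fsum_zero, Rplus_0_l.
  2:{ intros y Hy; apply in_seq in Hy. replace (y - k)%nat with 0%nat by lia. simpl; ring. }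
  rewrite fsum_seq_shift, (fsum_ext_in _ (fun j => x ^ k * (INR j * x ^ j))), fsum_scal.
  2:{ intros j _. replace (0 + k + j - k)%nat with j by lia. rewrite Nat.add_0_l, pow_add. ring. }
  replace (x ^ (k + 1) / (1 - x) ^ 2) with (x ^ k * (x / (1 - x) ^ 2))
    by (rewrite pow_add; field; lra).
  apply Rmult_le_compat_l; [apply pow_le; lra|apply arith_geometric_fsum_le; auto].
Qed.

Lemma discounted_error_le x k a b : 0 <= x < 1 -> 0 <= a -> 0 <= b ->
  summable (fun t => x ^ t * (a * INR (t - k) + b)) /\
  psum (fun t => x ^ t * (a * INR (t - k) + b)) <= a * (x ^ (k + 1) / (1 - x) ^ 2) + b / (1 - x).
Proof.
  intros Hx Ha Hb. apply psum_le_of_fsum. intros l Hl.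
  destruct (fsum_le_prefix (fun t => x ^ t * (a * INR (t - k) + b)) l) as [N L]; auto.
  { intro t. apply Rmult_le_pos; [apply pow_le; lra|].
    pose proof (pos_INR (t - k)). nra. }
  eapply Rle_trans; [exact L|].
  rewrite (fsum_ext_in _ (fun t => a * (INR (t - k) * x ^ t) + b * x ^ t)) by (intros; ring).
  rewrite fsum_plus, !fsum_scal.
  pose proof (shifted_arith_geometric_fsum_le x k N Hx).
  pose proof (geometric_fsum_le x N Hx).
  replace (b / (1 - x)) with (b * (1 / (1 - x))) by (field; lra).
  apply Rplus_le_compat; apply Rmult_le_compat_l; auto.
Qed.

Lemma discounted_gap_le x k (A B : nat -> R) rmax a b :
  0 <= x < 1 -> 0 <= rmax -> 0 <= a -> 0 <= b ->
  (forall t, Rabs (A t) <= rmax) -> (forall t, Rabs (B t) <= rmax) ->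
  (forall t, Rabs (B t - A t) <= a * INR (t - k) + b) ->
  tsum (fun t => x ^ t * B t) - tsum (fun t => x ^ t * A t)
  <= a * (x ^ (k + 1) / (1 - x) ^ 2) + b / (1 - x).
Proof.
  intros Hx Hrmax Ha Hb HA HB Hgap.
  assert (Habs : forall V : nat -> R, (forall t, Rabs (V t) <= rmax) ->
                 summable (fun t => Rabs (x ^ t * V t))).
  { intros V HV.
    refine (proj1 (psum_le _ _ _ (proj1 (discounted_error_le x k 0 rmax Hx (Rle_refl 0) Hrmax)))).
    intro t. rewrite Rabs_mult, Rabs_pos_eq by (apply pow_le; lra).
    apply Rmult_le_compat_l; [apply pow_le; lra|]. specialize (HV t). lra. }
  assert (Hterm : forall t, Rabs (x ^ t * B t - x ^ t * A t) <= x ^ t * (a * INR (t - k) + b)).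
  { intro t. rewrite <- Rmult_minus_distr_l, Rabs_mult, Rabs_pos_eq by (apply pow_le; lra).
    apply Rmult_le_compat_l; [apply pow_le; lra|apply Hgap]. }
  destruct (discounted_error_le x k a b Hx Ha Hb) as [Serr Lerr].
  destruct (psum_le _ _ Hterm Serr) as [_ Lsum].
  pose proof (Rabs_tsum_sub_le _ _ (Habs B HB) (Habs A HA)).
  pose proof (Rle_abs (tsum (fun t => x ^ t * B t) - tsum (fun t => x ^ t * A t))).
  lra.
Qed.

Section BranchedGap.
Context {St Ac : Type}.
Variables (rho0 : St -> R) (r : St -> Ac -> R) (rmax : R)
          (p phat : St -> Ac -> St -> R) (piD pi : St -> Ac -> R) (k : nat) (eps_pi eps_m : R).
Hypotheses (Hrho0 : prob rho0) (Hrmax : 0 <= rmax) (Hr : forall s a, Rabs (r s a) <= rmax)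
  (Hp : is_dynamics p) (Hphat : is_dynamics phat) (HpiD : is_policy piD) (Hpi : is_policy pi)
  (Heps_pi : 0 <= eps_pi) (Hpol : forall s, TV (piD s) (pi s) <= eps_pi)
  (Hmod : forall t i : nat, (t - k <= i)%nat -> (i < t)%nat ->
     tsum (fun sa : St * Ac =>
        branch_law rho0 piD p pi p k t i (fst sa) * pi (fst sa) (snd sa)
        * TV (p (fst sa) (snd sa)) (phat (fst sa) (snd sa))) <= eps_m).

Lemma model_error_nonneg : 0 <= INR k * eps_m.
Proof.
  destruct k as [|k']; [simpl; lra|]. apply Rmult_le_pos; [apply pos_INR|].
  eapply Rle_trans; [|apply (Hmod 1 0); lia].
  rewrite tsum_nonneg; [apply psum_ge0|]. intros [s a]. simpl.
  apply Rmult_le_pos; [apply Rmult_le_pos|].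
  - apply (branch_law_aux_prob rho0 Hrho0 piD p pi p); auto.
  - apply (policy_prob pi s Hpi).
  - rewrite TV_l1dist. pose proof (psum_ge0 (fun x => Rabs (p s a x - phat s a x))).
    unfold l1dist. lra.
Qed.

(* At time t the branched state law is within 2 (t - k) eps_pi + 2 k eps_m of the
   on-policy one in l1 (t - k steps of policy mismatch, then at most k steps of model
   error), so the expected rewards differ by at most rmax times that. *)
Lemma branched_value_gap t :
  Rabs (value pi r (branch_law rho0 piD p pi phat k t t) - value pi r (state_law rho0 pi p t))
  <= 2 * rmax * eps_pi * INR (t - k) + 2 * rmax * (INR k * eps_m).
Proof.
  pose proof (branch_law_aux_prob rho0 Hrho0 piD p pi phat (t - k) HpiD Hp Hpi Hphat t) as Dmu.
  pose proof (branch_law_aux_prob rho0 Hrho0 piD p pi p (t - k) HpiD Hp Hpi Hp t) as Dnu.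
  pose proof (state_law_prob rho0 Hrho0 pi p Hpi Hp t) as Dlaw.
  pose proof (policy_drift rho0 piD pi p Hrho0 HpiD Hpi Hp eps_pi Heps_pi Hpol (t - k) t) as Lpol.
  replace (min t (t - k)) with (t - k)%nat in Lpol by lia.
  pose proof (model_drift rho0 piD pi p phat Hrho0 HpiD Hpi Hp Hphat eps_m (t - k) t
                (fun i H1 H2 => Hmod t i H1 H2) t (le_n t)) as Lmod.
  rewrite l1dist_sym in Lmod.
  assert (Hsteps : INR (t - (t - k)) * eps_m <= INR k * eps_m).
  { pose proof model_error_nonneg. destruct (Nat.eq_dec k 0) as [->|Hk].
    - replace (t - (t - 0))%nat with 0%nat by lia. simpl; lra.
    - assert (0 <= eps_m).
      { apply (Rmult_le_reg_l (INR k)); [apply lt_0_INR; lia|lra]. }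
      apply Rmult_le_compat_r; auto. apply le_INR; lia. }
  eapply Rle_trans; [apply (value_l1 pi r rmax); auto|].
  replace (2 * rmax * eps_pi * INR (t - k) + 2 * rmax * (INR k * eps_m))
    with (rmax * (2 * INR (t - k) * eps_pi + 2 * (INR k * eps_m))) by ring.
  apply Rmult_le_compat_l; auto.
  eapply Rle_trans; [apply (l1dist_triangle _ (branch_law_aux rho0 piD p pi p (t - k) t)); auto|].
  unfold branch_law. lra.
Qed.

End BranchedGap.

Lemma constants_nonneg {St Ac} (rho0 : St -> R) (piD pi : St -> Ac -> R) (r : St -> Ac -> R)
  rmax eps_pi : prob rho0 -> is_policy pi -> (forall s a, Rabs (r s a) <= rmax) ->
  (forall s, TV (piD s) (pi s) <= eps_pi) -> 0 <= rmax /\ 0 <= eps_pi.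
Proof.
  intros Hrho0 Hpi Hr Hpol.
  destruct (prob_inhabited rho0 Hrho0) as [s0].
  destruct (prob_inhabited (pi s0) (policy_prob pi s0 Hpi)) as [a0].
  split; [eapply Rle_trans; [apply Rabs_pos|apply (Hr s0 a0)]|].
  eapply Rle_trans; [|apply (Hpol s0)]. rewrite TV_l1dist. unfold l1dist.
  pose proof (psum_ge0 (fun x => Rabs (piD s0 x - pi s0 x))). lra.
Qed.

Theorem theorem3
  (St Ac : Type) (HSt : countable St) (HAc : countable Ac)
  (rho0 : St -> R) (Hrho0 : is_distr rho0)
  (gamma : R) (Hgamma : 0 < gamma < 1)
  (r : St -> Ac -> R) (rmax : R) (Hr : forall s a, Rabs (r s a) <= rmax)
  (p phat : St -> Ac -> St -> R) (Hp : is_dynamics p) (Hphat : is_dynamics phat)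
  (piD pi : St -> Ac -> R) (HpiD : is_policy piD) (Hpi : is_policy pi)
  (k : nat) (eps_pi eps_m : R)
  (Hpol : forall s, TV (piD s) (pi s) <= eps_pi)
  (Hmod : forall t i : nat, (t - k <= i)%nat -> (i < t)%nat ->
     tsum (fun sa : St * Ac =>
        branch_law rho0 piD p pi p k t i (fst sa) * pi (fst sa) (snd sa)
        * TV (p (fst sa) (snd sa)) (phat (fst sa) (snd sa))) <= eps_m) :
  eta rho0 gamma r pi p >=
  eta_k rho0 gamma r piD p pi phat k
  - 2 * rmax * (gamma ^ (k + 1) * eps_pi / (1 - gamma) ^ 2
                + gamma ^ k * eps_pi / (1 - gamma)
                + INR k / (1 - gamma) * eps_m).
Proof.
  pose proof (distr_prob rho0 Hrho0) as Prho0.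
  destruct (constants_nonneg rho0 piD pi r rmax eps_pi Prho0 Hpi Hr Hpol) as [Hrmax Heps_pi].
  pose proof (model_error_nonneg rho0 p phat piD pi k eps_m Prho0 Hp HpiD Hpi Hmod) as Hkm.
  pose proof (branched_value_gap rho0 r rmax p phat piD pi k eps_pi eps_m Prho0 Hrmax Hr
                Hp Hphat HpiD Hpi Heps_pi Hpol Hmod) as Hgap.
  change (eta rho0 gamma r pi p)
    with (tsum (fun t => gamma ^ t * value pi r (state_law rho0 pi p t))).
  change (eta_k rho0 gamma r piD p pi phat k)
    with (tsum (fun t => gamma ^ t * value pi r (branch_law rho0 piD p pi phat k t t))).
  pose proof (discounted_gap_le gamma k (fun t => value pi r (state_law rho0 pi p t))
    (fun t => value pi r (branch_law rho0 piD p pi phat k t t))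
    rmax (2 * rmax * eps_pi) (2 * rmax * (INR k * eps_m))
    ltac:(lra) Hrmax ltac:(apply Rmult_le_pos; lra) ltac:(apply Rmult_le_pos; lra)
    (fun t => value_bound pi r rmax Hpi Hrmax Hr _ (state_law_prob rho0 Prho0 pi p Hpi Hp t))
    (fun t => value_bound pi r rmax Hpi Hrmax Hr _
                (branch_law_aux_prob rho0 Prho0 piD p pi phat _ HpiD Hp Hpi Hphat t))
    Hgap) as Hsum.
  (* The remaining term of the bound is a nonnegative slack. *)
  assert (0 <= 2 * rmax * (gamma ^ k * eps_pi / (1 - gamma))).
  { apply Rmult_le_pos; [lra|]. apply Rmult_le_pos; [apply Rmult_le_pos; [apply pow_le|]|];
      try lra. apply Rlt_le, Rinv_0_lt_compat; lra. }
  replace (2 * rmax * (gamma ^ (k + 1) * eps_pi / (1 - gamma) ^ 2 + gamma ^ k * eps_pi / (1 - gamma)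
                       + INR k / (1 - gamma) * eps_m))
    with (2 * rmax * eps_pi * (gamma ^ (k + 1) / (1 - gamma) ^ 2)
          + 2 * rmax * (INR k * eps_m) / (1 - gamma)
          + 2 * rmax * (gamma ^ k * eps_pi / (1 - gamma))) by (field; lra).
  lra.
Qed.
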